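(* Let $\Gamma$ be a simple $*$-path in $\Lambda$, let $t\in\mathbb{N}$ and $s\in\mathbb{N}$. For every $k\in\{0,\dots,|\mathrm{support}(\Gamma)|\}$ and every configuration $y$ in which exactly $k$ edges of $\Gamma$ are closed (with $P_\mu(Y_t=y)>0$), $$P_\mu\big(\Gamma\text{ closed in }Y_{t+s}\ \big|\ Y_t=y\big)\leqslant\left(\frac{s(1-p)}{|\Lambda|(1+p/q-p)}\right)^{|\mathrm{support}(\Gamma)|-k}.$$
   Context: Let $d\geqslant 2$, $\mathbb{L}^d=(\mathbb{Z}^d,\mathbb{E}^d)$ the nearest-neighbour lattice, and $q\geqslant 1$, $p\in[0,1]$. The box $\Lambda=(V,E)$ is the subgraph of $\mathbb{L}^d$ induced by the vertices in a $d$-dimensional cube centred at the origin (not necessarily axis-parallel); $|\Lambda|=|E|$. $\partial\Lambda=\{x\in V:\exists y\notin V,\ \langle x,y\rangle\in\mathbb{E}^d\}$. A hyperplane through the origin parallel to a face of the cube splits $\Lambda$ into $\Lambda^+,\Lambda^-$; $T=\partial\Lambda\cap\Lambda^+$, $B=\partial\Lambda\cap\Lambda^-$. For $\omega\in\{0,1\}^E$ (edges with $\omega(e)=1$ open), $\Phi^{TB}_{\Lambda,p,q}(\omega)\propto\prod_{e\in E}p^{\omega(e)}(1-p)^{1-\omega(e)}q^{k^{TB}(\omega)}$, where $k^{TB}(\omega)$ is the number of connected components of the graph obtained from $(V,\{\text{open edges}\})$ by adding two extra vertices, one joined to every vertex of $T$, the other to every vertex of $B$. $\{T\nleftrightarrow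 B\}$: no open path in $\Lambda$ joins $T$ to $B$. Coupled dynamics: $(E_t)_{t\in\mathbb{N}}$ i.i.d. uniform on $E$, $(U_t)_{t\in\mathbb{N}}$ i.i.d. uniform on $[0,1]$, independent. With $\Phi=\Phi^{TB}_{\Lambda,p,q}$, $\omega^e$ / $\omega_e$ the configuration with $e$ opened / closed, and $\theta(\omega,e)=\Phi(\omega_e)/(\Phi(\omega^e)+\Phi(\omega_e))$: at time $t$, with $e=E_t$, only $e$ is updated; $X_t(e)=1$ iff $U_t\geqslant\theta(X_{t-1},e)$; $Y_t(e)=1$ iff $U_t\geqslant\theta(Y_{t-1},e)$ and opening $e$ in $Y_{t-1}$ does not connect $T$ to $B$. On $\{(\omega_1,\omega_2):\omega_2\in\{T\nleftrightarrow B\},\ \omega_1\geqslant\omega_2\}$ this chain has a unique stationary distribution $\mu_{\Lambda,p,q}$; $P_\mu$ denotes the law of $(X_t,Y_t)_{t\in\mathbb{N}}$ started from $(X_0,Y_0)\sim\mu_{\Lambda,p,q}$. Two edges $e,f$ are $*$-neighbours if $\|m_e-m_f\|_\infty\leqslant 1$ ($m_e$ the midpoint of $e$); a $*$-path is a sequence of edges with consecutive ones $*$-neighbours; $\mathrm{support}(\Gamma)$ is its set of edges; it is simple if $|\mathrm{support}(\Gamma)|$ equals its length; ''$\Gamma$ closed in $Y_{t+s}$'' means all edges of $\Gamma$ are closed in $Y_{t+s}$. *)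

From HB Require Import structures.
From mathcomp Require Import all_boot all_order all_algebra.
From mathcomp Require Import boolp classical_sets reals ereal measure
  lebesgue_stieltjes_measure lebesgue_measure.
Set Implicit Arguments.
Unset Strict Implicit.
Unset Printing Implicit Defensive.
Import Order.TTheory GRing.Theory Num.Theory.
Local Open Scope ring_scope.

(* Finite ambient grid {-N,...,N}^d of Z^d (only an auxiliary container:
   the theorem assumes the box is contained in it). *)
Definition pt (d N : nat) := {ffun 'I_d -> 'I_(N + N).+1}.

Definition zcoord (d N : nat) (v : pt d N) : 'I_d -> int :=
  fun i => (v i)%:Z - N%:Z.

Definition adjZ (d : nat) (z w : 'I_d -> int) : bool :=
  (\sum_(i < d) absz (z i - w i))%N == 1%N.

Definition face_coord (R : realType) (d : nat) (O : 'M[R]_d) (i : 'I_d)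
  (z : 'I_d -> int) : R := \sum_(j < d) O i j * (z j)%:~R.

(* closed cube centred at the origin, face normals = rows of the
   orthogonal matrix O, half side-length r *)
Definition in_cube (R : realType) (d : nat) (O : 'M[R]_d) (r : R)
  (z : 'I_d -> int) : bool := [forall i, `|face_coord O i z| <= r].

Definition boxV (R : realType) (d N : nat) (O : 'M[R]_d) (r : R) : {set pt d N} :=
  [set v : pt d N | in_cube O r (zcoord v)].

Definition bdry (R : realType) (d N : nat) (O : 'M[R]_d) (r : R) : {set pt d N} :=
  [set v in boxV N O r |
     `[< exists z : 'I_d -> int, adjZ (zcoord v) z /\ ~~ in_cube O r z >]].

(* side v = true iff v in Lambda^+ *)
Definition Tset (R : realType) (d N : nat) (O : 'M[R]_d) (r : R)
  (side : pt d N -> bool) : {set pt d N} := [set v in bdry N O r | side v].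
Definition Bset (R : realType) (d N : nat) (O : 'M[R]_d) (r : R)
  (side : pt d N -> bool) : {set pt d N} := [set v in bdry N O r | ~~ side v].

Definition boxE (R : realType) (d N : nat) (O : 'M[R]_d) (r : R) : {set {set pt d N}} :=
  [set e : {set pt d N} | [exists x : pt d N, exists y : pt d N,
     [&& e == [set x; y], adjZ (zcoord x) (zcoord y), x \in boxV N O r
       & y \in boxV N O r]]].

Definition midpoint (R : realType) (d N : nat) (e : {set pt d N}) (i : 'I_d) : R :=
  (\sum_(v in e) (zcoord v i)%:~R) / 2.

Definition star_nb (R : realType) (d N : nat) : rel {set pt d N} :=
  fun e f => [forall i, `|midpoint R e i - midpoint R f i| <= 1].

Definition star_path (R : realType) (d N : nat) (G : seq {set pt d N}) : bool :=
  sorted (star_nb R (N:=N)) G.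

Definition path_support (d N : nat) (G : seq {set pt d N}) : {set {set pt d N}} :=
  [set e in G].

Definition simple_path (d N : nat) (G : seq {set pt d N}) : bool :=
  #|path_support G| == size G.

(* a configuration = its set of open edges (a subset of E) *)
Definition config (d N : nat) := {set {set pt d N}}.

Definition open_rel (d N : nat) (w : config d N) : rel (pt d N) :=
  fun a b => [set a; b] \in w.

Definition noTB (R : realType) (d N : nat) (O : 'M[R]_d) (r : R)
  (side : pt d N -> bool) (w : config d N) : bool :=
  [forall x in Tset O r side, forall y in Bset O r side,
      ~~ connect (open_rel w) x y].

(* graph (V, open edges) + ghost vertex inr true joined to T and ghost
   vertex inr false joined to B *)
Definition ext_adj (R : realType) (d N : nat) (O : 'M[R]_d) (r : R)
  (side : pt d N -> bool) (w : config d N) : rel (pt d N + bool) :=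
  fun a b => match a, b with
  | inl x, inl y => [set x; y] \in w
  | inl x, inr true | inr true, inl x => x \in Tset O r side
  | inl x, inr false | inr false, inl x => x \in Bset O r side
  | inr _, inr _ => false
  end.

Definition ext_vert (R : realType) (d N : nat) (O : 'M[R]_d) (r : R) :
  {pred (pt d N + bool)} :=
  fun a => match a with inl x => x \in boxV N O r | inr _ => true end.

Definition kTB (R : realType) (d N : nat) (O : 'M[R]_d) (r : R)
  (side : pt d N -> bool) (w : config d N) : nat :=
  n_comp (ext_adj O r side w) (@ext_vert R d N O r).

Definition FKweight (R : realType) (d N : nat) (O : 'M[R]_d) (r : R)
  (side : pt d N -> bool) (p q : R) (w : config d N) : R :=
  (\prod_(e in boxE N O r) (p ^+ (e \in w) * (1 - p) ^+ (1 - (e \in w))))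
  * q ^+ kTB O r side w.

Definition Phi (R : realType) (d N : nat) (O : 'M[R]_d) (r : R)
  (side : pt d N -> bool) (p q : R) (w : config d N) : R :=
  FKweight O r side p q w /
  \sum_(w' : config d N | w' \subset boxE N O r) FKweight O r side p q w'.

Definition theta (R : realType) (d N : nat) (O : 'M[R]_d) (r : R)
  (side : pt d N -> bool) (p q : R) (w : config d N) (e : {set pt d N}) : R :=
  Phi O r side p q (w :\ e) /
  (Phi O r side p q (e |: w) + Phi O r side p q (w :\ e)).

Definition state (d N : nat) := (config d N * config d N)%type.

Definition step (R : realType) (d N : nat) (O : 'M[R]_d) (r : R)
  (side : pt d N -> bool) (p q : R) (a : state d N) (e : {set pt d N}) (u : R)
  : state d N :=
  ((if theta O r side p q a.1 e <= u then e |: a.1 else a.1 :\ e),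
   (if (theta O r side p q a.2 e <= u) && noTB O r side (e |: a.2)
    then e |: a.2 else a.2 :\ e)).

Definition kernel (R : realType) (d N : nat) (O : 'M[R]_d) (r : R)
  (side : pt d N -> bool) (p q : R) (a b : state d N) : R :=
  (#|boxE N O r|%:R)^-1 *
  \sum_(e in boxE N O r)
     fine (@lebesgue_measure R
       [set u : R | (0 <= u <= 1) /\ step O r side p q a e u = b]%classic).

Fixpoint kpow (R : realType) (d N : nat) (O : 'M[R]_d) (r : R)
  (side : pt d N -> bool) (p q : R) (n : nat) (a b : state d N) : R :=
  match n with
  | 0 => (a == b)%:R
  | n'.+1 => \sum_(c : state d N) kpow O r side p q n' a c * kernel O r side p q c b
  end.

Definition chain_space (R : realType) (d N : nat) (O : 'M[R]_d) (r : R)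
  (side : pt d N -> bool) (a : state d N) : bool :=
  [&& a.1 \subset boxE N O r, a.2 \subset boxE N O r,
      noTB O r side a.2 & a.2 \subset a.1].

Definition is_stationary (R : realType) (d N : nat) (O : 'M[R]_d) (r : R)
  (side : pt d N -> bool) (p q : R) (nu : state d N -> R) : Prop :=
  [/\ forall a, 0 <= nu a,
      \sum_(a : state d N) nu a = 1,
      forall a, ~~ chain_space O r side a -> nu a = 0
    & forall b, \sum_(a : state d N) nu a * kernel O r side p q a b = nu b].

Definition is_unique_stationary (R : realType) (d N : nat) (O : 'M[R]_d) (r : R)
  (side : pt d N -> bool) (p q : R) (mu : state d N -> R) : Prop :=
  is_stationary O r side p q mu /\
  forall nu, is_stationary O r side p q nu -> forall a, nu a = mu a.

Definition law_at (R : realType) (d N : nat) (O : 'M[R]_d) (r : R)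
  (side : pt d N -> bool) (p q : R) (mu : state d N -> R) (t : nat)
  (b : state d N) : R :=
  \sum_(a : state d N) mu a * kpow O r side p q t a b.

Definition PY (R : realType) (d N : nat) (O : 'M[R]_d) (r : R)
  (side : pt d N -> bool) (p q : R) (mu : state d N -> R) (t : nat)
  (y : config d N) : R :=
  \sum_(x : config d N) law_at O r side p q mu t (x, y).

Definition closed_in (d N : nat) (G : seq {set pt d N}) (w : config d N) : bool :=
  all (fun e => e \notin w) G.

Definition PY_closed (R : realType) (d N : nat) (O : 'M[R]_d) (r : R)
  (side : pt d N -> bool) (p q : R) (mu : state d N -> R) (t s : nat)
  (y : config d N) (G : seq {set pt d N}) : R :=
  \sum_(x : config d N) law_at O r side p q mu t (x, y) *
     \sum_(b : state d N | closed_in G b.2) kpow O r side p q s (x, y) b.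

Definition cond_closed (R : realType) (d N : nat) (O : 'M[R]_d) (r : R)
  (side : pt d N -> bool) (p q : R) (mu : state d N -> R) (t s : nat)
  (y : config d N) (G : seq {set pt d N}) : R :=
  PY_closed O r side p q mu t s y G / PY O r side p q mu t y.

(* Let [n w] be the number of edges of [G] open in [w].  A step of the dynamics
   updates one uniformly chosen edge, so [n Y] drops by at most one, and only
   when an open edge [e] of [G] is closed, which happens with probability
   [theta(Y, e) / |E|].  Closing an edge creates at most one new cluster of the
   graph with the two ghost vertices, so the finite-energy bound
   [theta <= (1 - p) / (1 + p/q - p)] holds.  Induction on [s] with
   [(x + a)^n >= x^n + n x^(n-1) a] then bounds the probability that [G] is
   closed after [s] steps by [(s a)^(n Y)], with [a] the above bound over [|E|];
   stationarity of [mu] turns this into the conditional statement, where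
   [n y = |support G| - k]. *)

From HB Require Import structures.
From mathcomp Require Import all_boot all_order all_algebra.
From mathcomp Require Import boolp classical_sets reals ereal measure
  lebesgue_stieltjes_measure lebesgue_measure.
From mathcomp Require Import cardinality set_interval ring lra.
Import Order.TTheory GRing.Theory Num.Theory.

Set Implicit Arguments.
Unset Strict Implicit.
Unset Printing Implicit Defensive.

Local Open Scope ring_scope.

Section AddEdge.
Local Open Scope nat_scope.
Variables (T : finType) (e e' : rel T) (u v : T).
Hypotheses (sym_e : connect_sym e) (sym_e' : connect_sym e').
Hypothesis sub_e' :
  forall x y, e' x y -> [|| e x y, (x == u) && (y == v) | (x == v) && (y == u)].

Lemma connect_add_edge x y : connect e' x y ->
  [|| connect e x y, connect e x u && connect e v y | connect e x v && connect e u y].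
Proof.
case/connectP => s; elim: s x => [|z s IH] x /=; first by move=> _ ->; rewrite connect0.
case/andP => xz zs /(IH z zs); case/or3P: (sub_e' xz) =>
  [{}xz | /andP[/eqP-> /eqP->] | /andP[/eqP-> /eqP->]];
  case/or3P => [c | /andP[c1 c2] | /andP[c1 c2]]; apply/or3P.
- by constructor 1; exact: connect_trans (connect1 xz) c.
- by constructor 2; rewrite c2 (connect_trans (connect1 xz) c1).
- by constructor 3; rewrite c2 (connect_trans (connect1 xz) c1).
- by constructor 2; rewrite connect0 c.
- by constructor 2; rewrite connect0 c2.
- by constructor 1.
- by constructor 3; rewrite connect0 c.
- by constructor 1.
- by constructor 3; rewrite connect0 c2.
Qed.

(* [root e'] is injective on the [e]-roots of [a] other than [root e v]. *)
Lemma n_comp_add_edge (a : {pred T}) :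
  fingraph.closed e' a -> n_comp e a <= (n_comp e' a).+1.
Proof.
move=> cl_a; set S := predI (roots e) (mem a); set rv := fingraph.root e v.
have -> : n_comp e a = #|S| by [].
rewrite (cardD1 rv S); apply: leq_trans (_ : (#|[predD1 S & rv]|).+1 <= _).
  by case: (rv \in S).
rewrite ltnS -(@card_in_imset _ _ (fingraph.root e')); last first.
  move=> x x'; rewrite !inE => /and3P[nx /eqP rx _] /and3P[nx' /eqP rx' _] /eqP.
  rewrite root_connect // => /connect_add_edge /or3P[c | /andP[_ c] | /andP[c _]].
  - by rewrite -rx -rx'; apply/(fingraph.rootP sym_e).
  - by move: nx'; rewrite /rv -rx' (fingraph.rootP sym_e c) eqxx.
  - by move: nx; rewrite /rv -rx (fingraph.rootP sym_e c) eqxx.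
apply: subset_leq_card; apply/fintype.subsetP => z /imsetP[x]; rewrite !inE.
case/and3P => _ _ xa ->; rewrite /= roots_root //=.
by rewrite -(closed_connect cl_a (connect_root e' x)).
Qed.

End AddEdge.

Lemma set2_eq (T : finType) (a b x y : T) : [set a; b] = [set x; y] ->
  (a == x) && (b == y) || (a == y) && (b == x).
Proof.
move=> eq_ab.
have ha : a \in [set x; y] by rewrite -eq_ab set21.
have hb : b \in [set x; y] by rewrite -eq_ab set22.
have hx : x \in [set a; b] by rewrite eq_ab set21.
have hy : y \in [set a; b] by rewrite eq_ab set22.
move: ha hb hx hy => /set2P[]-> /set2P[]-> /set2P[]hx /set2P[]hy; subst;
  by rewrite ?eqxx ?orbT.
Qed.

Section ExtendedGraph.
Variables (R : realType) (d N : nat) (O : 'M[R]_d) (r : R) (side : pt d N -> bool).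
Notation E := (boxE N O r).

Lemma boxE_boxV f x : f \in E -> x \in f -> x \in boxV N O r.
Proof.
by rewrite inE => /existsP[a /existsP[b /and4P[/eqP-> _ ha hb]]] /set2P[]->.
Qed.

Lemma Tset_boxV x : x \in Tset O r side -> x \in boxV N O r.
Proof. by rewrite !inE => /andP[/andP[]]. Qed.

Lemma Bset_boxV x : x \in Bset O r side -> x \in boxV N O r.
Proof. by rewrite !inE => /andP[/andP[]]. Qed.

Lemma ext_adj_sym w : symmetric (ext_adj O r side w).
Proof. by move=> [a|[]] [b|[]] //=; rewrite finset.setUC. Qed.

Lemma ext_vert_inl x : (inl x \in @ext_vert R d N O r) = (x \in boxV N O r).
Proof. by []. Qed.

Lemma ext_vert_inr b : inr b \in @ext_vert R d N O r.
Proof. by []. Qed.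

Lemma ext_vert_closed (w : config d N) : w \subset E ->
  fingraph.closed (ext_adj O r side w) (@ext_vert R d N O r).
Proof.
move=> wE [a|[]] [b|[]] //=; rewrite ?ext_vert_inl ?ext_vert_inr.
- move=> /(fintype.subsetP wE) abE.
  by rewrite (boxE_boxV abE (set21 a b)) (boxE_boxV abE (set22 a b)).
- by move/Tset_boxV.
- by move/Bset_boxV.
- by move/Tset_boxV.
- by move/Bset_boxV.
Qed.

Lemma kTB_setD1_le (w : config d N) e : w \subset E -> e \in E ->
  (kTB O r side (w :\ e) <= (kTB O r side (e |: w)).+1)%N.
Proof.
move=> wE eE; have := eE; rewrite inE => /existsP[x /existsP[y /and4P[/eqP def_e _ _ _]]].
apply: (@n_comp_add_edge _ _ _ (inl x) (inl y)).
- exact: sym_connect_sym (ext_adj_sym _).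
- exact: sym_connect_sym (ext_adj_sym _).
- move=> [a|[]] [b|[]] //=; try by move=> ->.
  rewrite in_setU1 in_setD1; case: eqP => [ab_e _ | _ /= ->] //.
  by move: ab_e; rewrite def_e => /set2_eq /orP[]/andP[/eqP-> /eqP->]; rewrite !eqxx ?orbT.
- by apply: ext_vert_closed; rewrite finset.subUset finset.sub1set eE wE.
Qed.

Lemma noTB_subset (w w' : config d N) :
  w' \subset w -> noTB O r side w -> noTB O r side w'.
Proof.
move=> w'w /forall_inP noTB_w; apply/forall_inP => x xT; apply/forall_inP => y yB.
apply: contra (forall_inP (noTB_w x xT) y yB); apply: connect_sub => a b ab.
exact/connect1/(fintype.subsetP w'w).
Qed.

End ExtendedGraph.

Definition theta_max (R : realType) (p q : R) := (1 - p) / (1 + p / q - p).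

Section ThetaBound.
Variables (R : realType) (p q : R).

Lemma theta_max_den_gt0 : 0 <= p <= 1 -> 1 <= q -> 0 < 1 + p / q - p.
Proof.
move=> /andP[p_ge0 p_le1] q_ge1.
have q_gt0 : 0 < q by exact: lt_le_trans q_ge1.
have iq_gt0 : 0 < q^-1 by rewrite invr_gt0.
have iq_le1 : q^-1 <= 1 by rewrite invf_le1.
have : 0 <= (1 - p) * (1 - q^-1) by apply: mulr_ge0; lra.
have -> : 1 + p / q - p = (1 - p) * (1 - q^-1) + q^-1 by ring.
lra.
Qed.

Lemma theta_max_ge0 : 0 <= p <= 1 -> 1 <= q -> 0 <= theta_max p q.
Proof.
move=> p01 q_ge1; apply: divr_ge0; last exact: ltW (theta_max_den_gt0 p01 q_ge1).
by case/andP: p01 => _; rewrite subr_ge0.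
Qed.

Lemma closing_ratio_le (A : R) (k0 k1 : nat) :
  0 <= p <= 1 -> 1 <= q -> 0 <= A -> (k0 <= k1.+1)%N ->
  (1 - p) * A * q ^+ k0 / (p * A * q ^+ k1 + (1 - p) * A * q ^+ k0)
    <= theta_max p q.
Proof.
move=> p01 q_ge1 A_ge0 k01; have /andP[p_ge0 p_le1] := p01.
have q_gt0 : 0 < q by exact: lt_le_trans q_ge1.
have [qk0_gt0 qk1_gt0] : 0 < q ^+ k0 /\ 0 < q ^+ k1 by rewrite !exprn_gt0.
set a := _ * q ^+ k0; set b := _ * q ^+ k1.
have [a_ge0 b_ge0] : 0 <= a /\ 0 <= b by split; apply: mulr_ge0; nra.
have [->|ba_neq0] := eqVneq (b + a) 0; first by rewrite invr0 mulr0 theta_max_ge0.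
have ba_gt0 : 0 < b + a by rewrite lt_def ba_neq0 addr_ge0.
rewrite /theta_max ler_pdivrMr // mulrAC ler_pdivlMr ?theta_max_den_gt0 // -subr_ge0.
have -> : (1 - p) * (b + a) - a * (1 + p / q - p)
    = ((1 - p) * A * p) * (q ^+ k1 - q ^+ k0 / q).
  by rewrite /a /b; field; rewrite gt_eqF.
apply: mulr_ge0; first by apply: mulr_ge0 => //; apply: mulr_ge0; lra.
by rewrite subr_ge0 ler_pdivrMr // -exprSr ler_weXn2l.
Qed.

End ThetaBound.

Section FKConditional.
Variables (R : realType) (d N : nat) (O : 'M[R]_d) (r : R) (side : pt d N -> bool).
Variables (p q : R).
Notation E := (boxE N O r).
Notation kTB := (kTB O r side).
Notation FKweight := (FKweight O r side p q).

Definition weight_off (e : {set pt d N}) (w : config d N) : R :=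
  \prod_(f in E | f != e) (p ^+ (f \in w) * (1 - p) ^+ (1 - (f \in w))).

Lemma FKweight_setU1 (w : config d N) e : e \in E ->
  FKweight (e |: w) = p * weight_off e w * q ^+ kTB (e |: w).
Proof.
move=> eE; rewrite /FKweight (bigD1 e) //= setU11 expr1 subnn expr0 mulr1.
by congr (_ * _ * _); apply: eq_bigr => f /andP[_ /negbTE fe]; rewrite in_setU1 fe.
Qed.

Lemma FKweight_setD1 (w : config d N) e : e \in E ->
  FKweight (w :\ e) = (1 - p) * weight_off e w * q ^+ kTB (w :\ e).
Proof.
move=> eE; rewrite /FKweight (bigD1 e) //= setD11 expr0 mul1r subn0 expr1.
by congr (_ * _ * _); apply: eq_bigr => f /andP[_ fe]; rewrite in_setD1 fe.
Qed.

Lemma theta_le_max (w : config d N) e : 0 <= p <= 1 -> 1 <= q -> w \subset E -> e \in E ->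
  theta O r side p q w e <= theta_max p q.
Proof.
move=> p01 q_ge1 wE eE; rewrite /theta /Phi; set Z := \sum_(w' | _) _.
have [->|Z_neq0] := eqVneq Z 0.
  by rewrite invr0 !mulr0 mul0r theta_max_ge0.
have -> : forall a b : R, a / Z / (b / Z + a / Z) = a / (b + a).
  by move=> a b; rewrite -mulrDl invfM invrK mulrACA mulVf // mulr1.
rewrite FKweight_setU1 // FKweight_setD1 //; apply: closing_ratio_le => //.
  apply: prodr_ge0 => f _; case/andP: p01 => p_ge0 p_le1.
  by apply: mulr_ge0; apply: exprn_ge0; rewrite ?subr_ge0.
exact: kTB_setD1_le.
Qed.

End FKConditional.

Section Threshold.
Variable R : realType.
Notation lam := (@lebesgue_measure R).
Local Open Scope classical_set_scope.

Lemma lebesgue_measure_cc0 (b : R) : 0 <= b -> lam [set u | 0 <= u <= b] = b%:E.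
Proof.
move=> b_ge0; rewrite -set_itvcc lebesgue_measure_itv /= lte_fin.
case: ltrP => [_|b_le0]; first by rewrite oppr0 adde0.
by have -> : b = 0 by apply/eqP; rewrite eq_le b_le0 b_ge0.
Qed.

Lemma measurable_cc0 (b : R) : measurable [set u : R | 0 <= u <= b].
Proof. by rewrite -set_itvcc; exact: measurable_itv. Qed.

Lemma measurable_ler_eq (a : R) (i : bool) : measurable [set u : R | (a <= u) = i].
Proof.
case: i; first by rewrite -(set_itvcy a); exact: measurable_itv.
have -> : [set u : R | (a <= u) = false] = `]-oo, a[ :> set R.
  by rewrite set_itvNyo; apply/seteqP; split => u /= h; rewrite ?ltNge ?h // leNgt h.
exact: measurable_itv.
Qed.

Lemma measurable_threshold2 (a b : R) (Q : bool -> bool -> bool) :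
  measurable [set u : R | Q (a <= u) (b <= u)].
Proof.
pose F (ij : bool * bool) := if Q ij.1 ij.2
  then [set u : R | (a <= u) = ij.1] `&` [set u | (b <= u) = ij.2] else set0.
have -> : [set u : R | Q (a <= u) (b <= u)] = \bigcup_(ij in setT) F ij.
  apply/seteqP; split => u /= => [Qu | [[i j] _]].
    by exists (a <= u, b <= u); rewrite // /F /= Qu.
  by rewrite /F /=; case: ifP => // Qij [/= -> ->].
apply: fin_bigcup_measurable; first exact: finite_finset.
move=> ij _; rewrite /F; case: ifP => // _.
by apply: measurableI; exact: measurable_ler_eq.
Qed.

Lemma lebesgue_measure_sub01_fin (A : set R) :
  measurable A -> A `<=` [set u | 0 <= u <= 1] -> lam A \is a fin_num.
Proof.
move=> mA sA; rewrite ge0_fin_numE //; apply: le_lt_trans (ltey (1%:E)).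
rewrite -(lebesgue_measure_cc0 ler01); apply: le_measure => //; rewrite inE //.
exact: measurable_cc0.
Qed.

Variables (T : finType) (f : R -> T).
Hypothesis f_meas :
  forall P : pred T, measurable [set u : R | (0 <= u <= 1) /\ P (f u)].

Lemma measurable_fiber c : measurable [set u : R | (0 <= u <= 1) /\ f u = c].
Proof.
by have := f_meas (pred1 c); congr (measurable _); apply/seteqP; split => u /= [? /eqP].
Qed.

Lemma lebesgue_measure_preimage_seq (s : seq T) : uniq s ->
  (\sum_(c <- s) lam [set u | (0 <= u <= 1)%R /\ f u = c] =
   lam [set u | (0 <= u <= 1)%R /\ f u \in s])%E.
Proof.
elim: s => [_|c s IH /= /andP[c_s uniq_s]].
  rewrite big_nil -(measure0 lam); congr (lam _).
  by apply/seteqP; split => u //= [].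
rewrite big_cons IH // -measureU //; [| exact: measurable_fiber | exact: f_meas (mem s) |].
  congr (lam _); apply/seteqP; split => u /=.
    by move=> [[u01 ->] | [u01 u_s]]; rewrite inE ?eqxx ?u_s ?orbT.
  by move=> [u01]; rewrite inE => /orP[/eqP|]; [left | right].
by apply/seteqP; split => u //= [[_ ->] [_]]; rewrite (negPf c_s).
Qed.

Lemma sum_lebesgue_measure_preimage (P : pred T) :
  \sum_(c | P c) fine (lam [set u | (0 <= u <= 1) /\ f u = c]) =
  fine (lam [set u | (0 <= u <= 1) /\ P (f u)]).
Proof.
rewrite sum_fine; last first.
  by move=> c _; apply: lebesgue_measure_sub01_fin => [|u []//]; exact: measurable_fiber.
rewrite -big_filter lebesgue_measure_preimage_seq ?filter_uniq ?index_enum_uniq //.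
by congr (fine (lam _)); apply/seteqP; split => u /= [u01];
  rewrite mem_filter mem_index_enum andbT.
Qed.

End Threshold.

Section Chain.
Variables (R : realType) (d N : nat) (O : 'M[R]_d) (r : R) (side : pt d N -> bool).
Variables (p q : R).
Notation E := (boxE N O r).
Notation K := (kernel O r side p q).
Notation kpow := (kpow O r side p q).
Notation step := (step O r side p q).
Notation lam := (@lebesgue_measure R).
Local Open Scope classical_set_scope.

Definition admissibleY (c : state d N) := (c.2 \subset E) && noTB O r side c.2.

Lemma step_admissibleY c e u : admissibleY c -> e \in E -> admissibleY (step c e u).
Proof.
move=> /andP[c2E noTB_c2] eE; rewrite /admissibleY /=; case: ifP => [/andP[_ ->]|_].
  by rewrite andbT finset.subUset finset.sub1set eE.
by rewrite (fintype.subset_trans (subD1set _ _) c2E) (noTB_subset (subD1set _ _) noTB_c2).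
Qed.

Lemma measurable_step c e (P : pred (state d N)) :
  measurable [set u : R | (0 <= u <= 1) /\ P (step c e u)].
Proof.
apply: measurableI; first exact: measurable_cc0.
exact: (measurable_threshold2 _ _ (fun i j => P
  ((if i then e |: c.1 else c.1 :\ e),
   (if j && noTB O r side (e |: c.2) then e |: c.2 else c.2 :\ e)))).
Qed.

Lemma kernel_sum c (P : pred (state d N)) : \sum_(b | P b) K c b =
  #|E|%:R^-1 * \sum_(e in E) fine (lam [set u | (0 <= u <= 1) /\ P (step c e u)]).
Proof.
rewrite /kernel -big_distrr /= exchange_big /=; congr (_ * _).
by apply: eq_bigr => e _; exact: (sum_lebesgue_measure_preimage (measurable_step c e)).
Qed.

Lemma kernel_ge0 c b : 0 <= K c b.
Proof.
rewrite mulr_ge0 ?invr_ge0 ?ler0n //.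
by apply: sumr_ge0 => e _; apply/fine_ge0/measure_ge0.
Qed.

Lemma kernel_sum_le1 c : \sum_b K c b <= 1.
Proof.
have -> : \sum_b K c b = #|E|%:R^-1 * \sum_(e in E) 1.
  rewrite (kernel_sum c predT); congr (_ * _); apply: eq_bigr => e _.
  rewrite (_ : [set u | _ /\ _] = [set u : R | 0 <= u <= 1]) ?lebesgue_measure_cc0 //.
  by apply/seteqP; split => u [].
rewrite sumr_const; have [->|E_neq0] := eqVneq #|E| 0%N; first by rewrite mulr0n mulr0.
by rewrite mulVf // pnatr_eq0.
Qed.

Lemma kernel_neq0_step c b : K c b != 0 ->
  exists e (u : R), [/\ e \in E, 0 <= u <= 1 & step c e u = b].
Proof.
apply: contra_neqP => no_step; rewrite /kernel big1 ?mulr0 // => e eE.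
rewrite (_ : [set u | _ /\ _] = set0) ?measure0 //.
by apply/seteqP; split => u //= [u01 stb]; apply: no_step; exists e, u.
Qed.

Lemma kpow_ge0 n a b : 0 <= kpow n a b.
Proof.
elim: n a b => [|n IH] a b /=; first by rewrite ler0n.
by apply: sumr_ge0 => c _; rewrite mulr_ge0 ?kernel_ge0.
Qed.

Lemma kpow_sum_le1 n a : \sum_b kpow n a b <= 1.
Proof.
elim: n a => [|n IH] a /=.
  by rewrite (bigD1 a) //= eqxx big1 ?addr0 // => b /negPf; rewrite eq_sym => ->.
rewrite exchange_big /=; apply: le_trans (IH a); apply: ler_sum => c _.
by rewrite -big_distrr /= ler_piMr ?kpow_ge0 ?kernel_sum_le1.
Qed.

Lemma kpowSl n a b : kpow n.+1 a b = \sum_c K a c * kpow n c b.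
Proof.
elim: n a b => [|n IH] a b.
  rewrite /= (bigD1 a) //= eqxx mul1r big1 ?addr0; last first.
    by move=> c /negPf; rewrite eq_sym => ->; rewrite mul0r.
  rewrite (bigD1 b) //= eqxx mulr1 big1 ?addr0 // => c /negPf ->.
  by rewrite mulr0.
transitivity (\sum_c kpow n.+1 a c * K c b) => //.
rewrite (eq_bigr (fun c => \sum_c' K a c' * kpow n c' c * K c b)); last first.
  by move=> c _; rewrite IH big_distrl.
rewrite exchange_big /=; apply: eq_bigr => c' _.
by rewrite big_distrr /=; apply: eq_bigr => c _; rewrite mulrA.
Qed.

Lemma law_at_stationary mu t b : is_stationary O r side p q mu ->
  law_at O r side p q mu t b = mu b.
Proof.
case=> _ _ _ mu_inv; elim: t b => [|t IH] b.
  rewrite /law_at (bigD1 b) //= eqxx mulr1 big1 ?addr0 // => a /negPf ->.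
  by rewrite mulr0.
rewrite /law_at /= -mu_inv.
under eq_bigr do rewrite big_distrr /=.
rewrite exchange_big /=; apply: eq_bigr => c _.
by rewrite -IH /law_at big_distrl; apply: eq_bigr => a _; rewrite mulrA.
Qed.

End Chain.

Section OpenCount.
Variables (T : finType) (G : seq T).

Definition nopen (w : {set T}) := #|[set f in G | f \in w]|.

Lemma nopen_eq0 (w : {set T}) : (nopen w == 0%N) = all (fun f => f \notin w) G.
Proof.
rewrite cards_eq0; apply/eqP/allP => [G_w f fG | G_w].
  apply/negP => fw; have : f \in [set f in G | f \in w] by rewrite inE fG fw.
  by rewrite G_w inE.
by apply/finset.setP => f; rewrite !inE; apply/negbTE; case fG: (f \in G); rewrite ?G_w.
Qed.

Lemma nopen_setU1 e (w : {set T}) : (nopen w <= nopen (e |: w))%N.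
Proof.
by apply/subset_leq_card/fintype.subsetP => f; rewrite !inE => /andP[-> ->]; rewrite orbT.
Qed.

Lemma nopen_setD1 e (w : {set T}) : (nopen w <= (nopen (w :\ e)).+1)%N.
Proof.
apply: leq_trans (_ : #|e |: [set f in G | f \in w :\ e]| <= _)%N; last first.
  by rewrite cardsU1; case: (_ \in _).
apply/subset_leq_card/fintype.subsetP => f; rewrite !inE => /andP[-> ->].
by case: (f == e).
Qed.

Lemma nopen_setD1_id e (w : {set T}) : ~~ ((e \in G) && (e \in w)) ->
  nopen (w :\ e) = nopen w.
Proof.
move=> e_nGw; apply: eq_card => f; rewrite !inE.
by case: (eqVneq f e) => [-> | //]; move: e_nGw; case: (e \in G); case: (e \in w).
Qed.

Lemma nopenE (w : {set T}) :
  (#|[set f in G]| - #|[set f in G | f \notin w]|)%N = nopen w.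
Proof.
have -> : [set f in G | f \notin w] = [set f in G] :\: w.
  by apply/finset.setP => f; rewrite !inE andbC.
by rewrite -(cardsID w [set f in G]) addnK; apply: eq_card => f; rewrite !inE.
Qed.

End OpenCount.

Lemma ler_exprn_le1 (R : realFieldType) (g x : R) (a b : nat) :
  0 <= x -> g <= 1 -> g <= x ^+ a -> (b <= a)%N -> g <= x ^+ b.
Proof.
move=> x_ge0 g_le1 g_le ba; case: (lerP x 1) => [x_le1 | x_gt1].
  exact: le_trans g_le (ler_wiXn2l x_ge0 x_le1 ba).
exact: le_trans g_le1 (exprn_ege1 _ (ltW x_gt1)).
Qed.

Lemma exprSD_ge_linear (R : realFieldType) (a b : R) (m : nat) : 0 <= a -> 0 <= b ->
  a ^+ m.+1 + a ^+ m * (m.+1%:R * b) <= (a + b) ^+ m.+1.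
Proof.
move=> a_ge0 b_ge0; elim: m => [|m IH]; first by rewrite expr1 expr0 !mul1r.
rewrite [in leRHS]exprS; apply: le_trans (ler_wpM2l (addr_ge0 a_ge0 b_ge0) IH).
rewrite -subr_ge0 !exprS -[m.+2]addn2 -[m.+1]addn1 !natrD.
have -> : (a + b) * (a * a ^+ m + a ^+ m * ((m%:R + 1%:R) * b)) -
    (a * (a * a ^+ m) + a * a ^+ m * ((m%:R + 2%:R) * b))
    = (m%:R + 1) * (a ^+ m * b * b) by ring.
by rewrite mulr_ge0 ?addr_ge0 ?ler0n // !mulr_ge0 // exprn_ge0.
Qed.

Section Descent.
Variables (R : realType) (d N : nat) (O : 'M[R]_d) (r : R) (side : pt d N -> bool).
Variables (p q : R) (G : seq {set pt d N}).
Notation E := (boxE N O r).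
Notation K := (kernel O r side p q).
Notation kpow := (kpow O r side p q).
Notation step := (step O r side p q).
Notation lam := (@lebesgue_measure R).
Local Open Scope classical_set_scope.
Notation n := (nopen G).

Lemma nopen_step_ge c e u : (n c.2 <= (n (step c e u).2).+1)%N.
Proof.
by rewrite /step /=; case: ifP => _; [exact/leqW/nopen_setU1 | exact: nopen_setD1].
Qed.

Lemma nopen_step_lt c e u : admissibleY O r side c ->
  (n (step c e u).2 < n c.2)%N -> [&& e \in G, e \in c.2 & u < theta O r side p q c.2 e].
Proof.
move=> /andP[_ noTB_c2]; rewrite /step /=; case: ifP => [_ | open_fails].
  by rewrite ltnNge nopen_setU1.
have [/andP[eG ec2] _ | e_nGc2] := boolP ((e \in G) && (e \in c.2)); last first.
  by rewrite nopen_setD1_id // ltnn.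
rewrite eG ec2 ltNge; apply: contraFN open_fails => ->.
by rewrite (finset.setUidPr _) ?finset.sub1set.
Qed.

Hypotheses (p01 : 0 <= p <= 1) (q_ge1 : 1 <= q).

Lemma lebesgue_step_nopen_lt c e : admissibleY O r side c -> e \in E ->
  fine (lam [set u | (0 <= u <= 1) /\ (n (step c e u).2 < n c.2)%N])
    <= ((e \in G) && (e \in c.2))%:R * theta_max p q.
Proof.
move=> adm_c eE; have tmax_ge0 := theta_max_ge0 p01 q_ge1.
have [eGc2 | e_nGc2] := boolP ((e \in G) && (e \in c.2)); last first.
  rewrite mul0r (_ : [set u | _ /\ _] = set0) ?measure0 //.
  apply/seteqP; split => u //= [_ /(nopen_step_lt adm_c) /and3P[eG ec2 _]].
  by rewrite eG ec2 in e_nGc2.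
rewrite mul1r -[leRHS]/(fine (theta_max p q)%:E) -(lebesgue_measure_cc0 tmax_ge0).
have meas_dec := measurable_step O r side p q c e (fun b => n b.2 < n c.2)%N.
apply: fine_le; first by apply: lebesgue_measure_sub01_fin meas_dec _ => u [].
  by rewrite lebesgue_measure_cc0.
apply: le_measure; rewrite ?inE //; first exact: measurable_cc0.
move=> u /= [/andP[u_ge0 _] /(nopen_step_lt adm_c) /and3P[_ _ u_lt]].
rewrite u_ge0 (le_trans (ltW u_lt)) // theta_le_max //.
by case/andP: adm_c.
Qed.

Lemma kernel_nopen_lt c : admissibleY O r side c ->
  \sum_(b | (n b.2 < n c.2)%N) K c b <= (n c.2)%:R * (#|E|%:R^-1 * theta_max p q).
Proof.
move=> adm_c; rewrite kernel_sum mulrCA ler_wpM2l ?invr_ge0 //.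
apply: le_trans (ler_sum _ (fun e eE => lebesgue_step_nopen_lt adm_c eE)) _.
rewrite -big_distrl /= ler_wpM2r ?theta_max_ge0 //.
rewrite (eq_bigr (fun e => if (e \in G) && (e \in c.2) then 1 else 0)); last first.
  by move=> e _; case: ifP.
rewrite -big_mkcondr /= sumr_const ler_nat.
by apply/subset_leq_card/fintype.subsetP => e; rewrite !inE => /andP[_].
Qed.

Definition prob_closed_after s c := \sum_(b | closed_in G b.2) kpow s c b.

Lemma prob_closed_after_le1 s c : prob_closed_after s c <= 1.
Proof.
apply: le_trans (kpow_sum_le1 O r side p q s c).
rewrite [leRHS](bigID (fun b => closed_in G b.2)) /= lerDl.
by apply: sumr_ge0 => b _; exact: kpow_ge0.
Qed.

Lemma prob_closed_afterS s c :
  prob_closed_after s.+1 c = \sum_c' K c c' * prob_closed_after s c'.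
Proof.
rewrite /prob_closed_after; under eq_bigr do rewrite kpowSl.
by rewrite exchange_big; apply: eq_bigr => c' _; rewrite big_distrr.
Qed.

(* A step lowers [n] by at most one, and does so with probability at most
   [n * alpha] ([kernel_nopen_lt]); [exprSD_ge_linear] absorbs this loss. *)
Lemma prob_closed_after_le s c : admissibleY O r side c ->
  prob_closed_after s c <= (s%:R * (#|E|%:R^-1 * theta_max p q)) ^+ n c.2.
Proof.
set alpha := _ * theta_max p q.
have alpha_ge0 : 0 <= alpha by rewrite mulr_ge0 ?invr_ge0 ?theta_max_ge0.
elim: s c => [|s IH] c adm_c; case n_c: (n c.2) => [|m];
  rewrite ?expr0 ?prob_closed_after_le1 //.
  rewrite mul0r expr0n /= /prob_closed_after big1 // => b closed_b.
  rewrite /=; case: eqP => // c_b.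
  by move: closed_b; rewrite /closed_in -nopen_eq0 -c_b n_c.
set x := s%:R * alpha; have x_ge0 : 0 <= x by rewrite mulr_ge0.
have step_le c' : K c c' * prob_closed_after s c' <=
    x ^+ m.+1 * K c c' + x ^+ m * (if (n c'.2 < m.+1)%N then K c c' else 0).
  have [-> | K_neq0] := eqVneq (K c c') 0.
    by rewrite mul0r mulr0 if_same mulr0 addr0.
  have [e [u [eE _ def_c']]] := kernel_neq0_step K_neq0.
  have IHc' : prob_closed_after s c' <= x ^+ n c'.2.
    by apply: IH; rewrite -def_c'; exact: step_admissibleY.
  have n_ge : (m <= n c'.2)%N by rewrite -ltnS -n_c -def_c' nopen_step_ge.
  rewrite [leRHS]addrC mulrC; case: ltnP => [n_lt | n_gt].
    have n_eq : n c'.2 = m by apply/eqP; rewrite eqn_leq n_ge -ltnS n_lt.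
    rewrite -mulrDl ler_wpM2r ?kernel_ge0 // (le_trans IHc') // n_eq.
    by rewrite lerDl exprn_ge0.
  rewrite mulr0 add0r ler_wpM2r ?kernel_ge0 //.
  by apply: ler_exprn_le1 x_ge0 _ IHc' n_gt; exact: prob_closed_after_le1.
rewrite prob_closed_afterS; apply: le_trans (ler_sum _ (fun c' _ => step_le c')) _.
rewrite big_split /= -(big_distrr (x ^+ m.+1)) -(big_distrr (x ^+ m)) -big_mkcond /=.
have -> : s.+1%:R * alpha = x + alpha by rewrite mulrSr mulrDl mul1r.
apply: le_trans (exprSD_ge_linear m x_ge0 alpha_ge0); apply: lerD.
  by rewrite ler_piMr ?exprn_ge0 ?kernel_sum_le1.
by rewrite ler_wpM2l ?exprn_ge0 // -n_c kernel_nopen_lt.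
Qed.

End Descent.

Theorem lemma4p1 (R : realType) (d N : nat) (O : 'M[R]_d) (r : R) (i0 : 'I_d)
  (side : pt d N -> bool) (p q : R) (mu : state d N -> R)
  (G : seq {set pt d N}) (t s k : nat) (y : config d N) :
  (2 <= d)%N ->
  O *m O^T = 1%:M -> 0 < r ->
  (forall z : 'I_d -> int, in_cube O r z -> forall j, `|z j| <= N%:Z) ->
  (forall v, v \in boxV N O r -> 0 < face_coord O i0 (zcoord v) -> side v) ->
  (forall v, v \in boxV N O r -> face_coord O i0 (zcoord v) < 0 -> ~~ side v) ->
  0 <= p <= 1 -> 1 <= q ->
  is_unique_stationary O r side p q mu ->
  star_path R G -> {subset G <= boxE N O r} -> simple_path G ->
  y \subset boxE N O r ->
  #|[set e in G | e \notin y]| = k ->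
  0 < PY O r side p q mu t y ->
  cond_closed O r side p q mu t s y G <=
  ((s%:R * (1 - p)) / (#|boxE N O r|%:R * (1 + p / q - p))) ^+ (#|path_support G| - k).
Proof.
move=> _ _ _ _ _ _ p01 q_ge1 [mu_stat _] _ _ _ _ <- PY_gt0.
have -> : (s%:R * (1 - p)) / (#|boxE N O r|%:R * (1 + p / q - p)) =
    s%:R * (#|boxE N O r|%:R^-1 * theta_max p q) by rewrite /theta_max invfM; ring.
rewrite nopenE /cond_closed ler_pdivrMr // /PY_closed /PY big_distrr /=.
apply: ler_sum => x _; rewrite law_at_stationary // mulrC.
case: mu_stat => mu_ge0 _ mu_out _.
have [-> | mu_neq0] := eqVneq (mu (x, y)) 0; first by rewrite !mulr0.
have adm : admissibleY O r side (x, y).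
  move: mu_neq0; apply: contraNT => not_adm; apply/eqP/mu_out.
  by apply: contra not_adm => /and4P[_ yE noTB_y _]; apply/andP.
by rewrite ler_wpM2r ?mu_ge0 ?prob_closed_after_le.
Qed.
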